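(* Let $k$ and $d$ be positive integers. Let $G$ be a simple undirected graph and let $v$ be a vertex of $G$ that has at least $R(k+2,d)$ neighbours which are pairwise non-adjacent in $G$. Suppose $G$ can be represented as the intersection graph of an arrangement $\mathcal{R}$ of axis-aligned hypercubes in $\mathbb{R}^d$, with $f\colon V(G)\to\mathcal{R}$ the corresponding bijection (so that for distinct vertices $u,u'$, $uu'\in E(G)$ if and only if $f(u)\cap f(u')\neq\emptyset$). Then there is a neighbour $w$ of $v$ such that the hypercube $f(w)$ is more than $k$ times smaller than $f(v)$, i.e. $k\cdot s(f(w)) < s(f(v))$, where $s(\cdot)$ denotes the side length of a hypercube.
   Context: $R(k,d)$ denotes the Ramsey number: the smallest integer $N$ such that every colouring of the edges of the complete graph on $N$ vertices with $d$ colours contains a monochromatic clique on $k$ vertices. An axis-aligned hypercube in $\mathbb{R}^d$ is a set of the form $\prod_{c=1}^d [p_c, p_c+s]$ with $s>0$. *)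

From HB Require Import structures.
From mathcomp Require Import all_boot all_order all_algebra.
From mathcomp Require Import reals.
Set Implicit Arguments. Unset Strict Implicit. Unset Printing Implicit Defensive.
Import Order.TTheory GRing.Theory Num.Theory.
Local Open Scope ring_scope.

(* Ramsey property: every colouring with [d] colours of the edges of the
   complete graph on 'I_N contains a monochromatic clique on [k] vertices.
   An edge {i,j} with i < j gets colour [c i j]. *)
Definition ramsey_prop (k d N : nat) : Prop :=
  forall c : 'I_N -> 'I_N -> 'I_d,
    exists (S : {set 'I_N}) (col : 'I_d),
      #|S| = k /\
      (forall i j, i \in S -> j \in S -> (i < j)%N -> c i j = col).

Definition is_ramsey_number (k d N : nat) : Prop :=
  ramsey_prop k d N /\ (forall M, ramsey_prop k d M -> (N <= M)%N).

Definition in_cube (R : realType) (d : nat) (p : 'I_d -> R) (s : R)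
  (x : 'I_d -> R) : Prop :=
  forall c : 'I_d, p c <= x c <= p c + s.

Definition simple_graph (T : finType) (e : rel T) : Prop :=
  symmetric e /\ irreflexive e.

From HB Require Import structures.
From mathcomp Require Import all_boot all_order all_algebra.
From mathcomp Require Import reals.
From mathcomp Require Import lra.
Set Implicit Arguments. Unset Strict Implicit. Unset Printing Implicit Defensive.
Import Order.TTheory GRing.Theory Num.Theory.
Local Open Scope ring_scope.

(* Two disjoint axis-parallel cubes are separated along some coordinate.
   Colouring each pair among the R(k+2,d) independent neighbours of v by such
   a coordinate, Ramsey's theorem yields k+2 of them that are pairwise
   separated along a single coordinate c.  Their projections onto coordinate c
   are k+2 pairwise disjoint intervals, each meeting the projection I of the
   cube of v; the k of them other than the leftmost and the rightmost lie
   strictly inside I, so their lengths add up to less than s(v), and one of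
   them is shorter than s(v)/k. *)

Section SeparatedIntervals.
Variables (R : realType) (I : Type) (a l : I -> R).

Definition separated (i j : I) := (a i + l i < a j) || (a j + l j < a i).

Lemma separatedC i j : separated i j = separated j i.
Proof. by rewrite /separated orbC. Qed.

Hypothesis l_ge0 : forall i, 0 <= l i.

Lemma separated_lt i j : a i <= a j -> separated i j -> a i + l i < a j.
Proof. by move=> le_ij /orP[// | lt_ji]; have := l_ge0 j; lra. Qed.

End SeparatedIntervals.

Section IntervalPacking.
Variables (R : realType) (I : finType) (a l : I -> R).
Hypothesis l_ge0 : forall i, 0 <= l i.

Lemma sum_separated_lt (M : {set I}) (lo hi : R) : lo < hi ->
  {in M &, forall i j, i != j -> separated a l i j} ->
  {in M, forall i, lo < a i /\ a i + l i <= hi} ->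
  \sum_(i in M) l i < hi - lo.
Proof.
have [n] := ubnP #|M|; elim: n M hi => // n IH M hi ltMn lt_lohi sepM inM.
have [-> | [j0 j0M]] := set_0Vmem M; first by rewrite big_set0 subr_gt0.
case: (arg_maxP a (j0M : [in M] j0)) => j jM jmax.
have [lt_loj le_jhi] := inM j jM.
rewrite (big_setD1 j jM) /=.
suff : \sum_(i in M :\ j) l i < a j - lo by lra.
apply: IH lt_loj _ _.
- by move: ltMn; rewrite (cardsD1 j M) jM add1n.
- by move=> i i' /setD1P[_ iM] /setD1P[_ i'M]; apply: sepM.
move=> i /setD1P[neq_ij iM]; split; first by case: (inM i iM).
by apply/ltW/(separated_lt l_ge0); [exact: jmax | exact: sepM].
Qed.

Lemma exists_short_interval (A : {set I}) (P L : R) (k : nat) : (0 < k)%N ->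
  #|A| = k.+2 -> {in A &, forall i j, i != j -> separated a l i j} ->
  {in A, forall i, P <= a i + l i /\ a i <= P + L} ->
  exists2 i, i \in A & k%:R * l i < L.
Proof.
move=> k_gt0 cardA sepA meetA.
have /card_gt0P[i0 i0A] : (0 < #|A|)%N by rewrite cardA.
case: (arg_minP a (i0A : [in A] i0)) => lft lftA lftmin.
have cardA' : #|A :\ lft| = k.+1 by move: cardA; rewrite (cardsD1 lft A) lftA => -[].
have /card_gt0P[i1 i1A'] : (0 < #|A :\ lft|)%N by rewrite cardA'.
case: (arg_maxP a (i1A' : [in A :\ lft] i1)) => rgt /setD1P[neq_rl rgtA] rgtmax.
set M := A :\ lft :\ rgt.
have cardM : #|M| = k by move: cardA'; rewrite (cardsD1 rgt) !inE neq_rl rgtA => -[].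
have inside : \sum_(i in M) l i < a rgt - (a lft + l lft).
  apply: sum_separated_lt.
  - by apply/(separated_lt l_ge0)/sepA; rewrite 1?eq_sym //; apply: lftmin.
  - by move=> i j /setD1P[_ /setD1P[_ iA]] /setD1P[_ /setD1P[_ jA]]; apply: sepA.
  move=> i /setD1P[neq_ir /setD1P[neq_il iA]]; split.
    by apply/(separated_lt l_ge0)/sepA; rewrite 1?eq_sym //; apply: lftmin.
  by apply/ltW/separated_lt/sepA => //; apply: rgtmax; rewrite !inE neq_il.
apply/exists_inP; apply: contraT => /exists_inPn no_short.
have long : L *+ k <= k%:R * \sum_(i in M) l i.
  rewrite mulr_sumr -[in L *+ k]cardM -sumr_const.
  apply: ler_sum => i /setD1P[_ /setD1P[_ iA]].
  by rewrite leNgt; apply: no_short.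
have [le_P_lft _] := meetA lft lftA; have [_ le_rgt_PL] := meetA rgt rgtA.
have k_pos : (0 : R) < k%:R by rewrite ltr0n.
by move: long inside le_P_lft le_rgt_PL k_pos; rewrite -mulr_natr; nra.
Qed.

End IntervalPacking.

Section Cubes.
Variables (R : realType) (d : nat).

Lemma in_cube_overlap (p p' : 'I_d -> R) (s s' : R) x c :
  in_cube p s x -> in_cube p' s' x -> p c <= p' c + s' /\ p' c <= p c + s.
Proof. by move=> /(_ c)/andP[? ?] /(_ c)/andP[? ?]; split; lra. Qed.

Lemma cubes_meet_of_overlap (p p' : 'I_d -> R) (s s' : R) : 0 <= s -> 0 <= s' ->
  (forall c, p c <= p' c + s' /\ p' c <= p c + s) ->
  exists x, in_cube p s x /\ in_cube p' s' x.
Proof.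
move=> s_ge0 s'_ge0 overlap; exists (fun c => Num.max (p c) (p' c)).
by split=> c; have := overlap c; rewrite le_max ge_max lexx; case: leP => /=; lra.
Qed.

Lemma disjoint_cubes_separated (T : Type) (p : T -> 'I_d -> R) (s : T -> R) u u' :
  0 <= s u -> 0 <= s u' ->
  ~ (exists x, in_cube (p u) (s u) x /\ in_cube (p u') (s u') x) ->
  exists c, separated (p^~ c) s u u'.
Proof.
move=> su_ge0 su'_ge0 disj; apply/existsP; apply: contraT => /existsPn apart.
case: disj; apply: cubes_meet_of_overlap => // c.
by move: (apart c); rewrite negb_or -!leNgt => /andP[? ?].
Qed.

End Cubes.

Lemma ramsey_monochromatic_subset (T : finType) (n d N : nat)
    (P : T -> T -> 'I_d -> bool) (S : {set T}) :
  ramsey_prop n d N -> (0 < d)%N -> (forall u u' c, P u u' c = P u' u c) ->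
  (N <= #|S|)%N -> {in S &, forall u u', u != u' -> exists c, P u u' c} ->
  exists (A : {set T}) (c : 'I_d),
    [/\ A \subset S, #|A| = n & {in A &, forall u u', u != u' -> P u u' c}].
Proof.
move=> ramseyN d_gt0 PC leNS coloured.
pose g (i : 'I_N) : T := enum_val (widen_ord leNS i).
have gS i : g i \in S := enum_valP _.
have g_inj : injective g by move=> i j; rewrite /g => /enum_val_inj[/val_inj].
pose col i j := odflt (Ordinal d_gt0) [pick c | P (g i) (g j) c].
have [B [c [cardB Bmono]]] := ramseyN col.
exists (g @: B), c; split; first by apply/subsetP => _ /imsetP[i _ ->].
  by rewrite card_imset.
move=> _ _ /imsetP[i iB ->] /imsetP[j jB ->].
wlog lt_ij : i j iB jB / (i < j)%N => [wlog_lt | neq_g].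
  case: (ltngtP i j) => [lt_ij | lt_ji | /val_inj ->]; last by rewrite eqxx.
  - exact: wlog_lt.
  - by rewrite eq_sym PC; apply: wlog_lt.
have := Bmono i j iB jB lt_ij; rewrite /col; case: pickP => [c' Pc' /= <- // | noP _].
by have [c' Pc'] := coloured _ _ (gS i) (gS j) neq_g; rewrite noP in Pc'.
Qed.

Theorem lemma5 (R : realType) (k d N : nat) (T : finType) (e : rel T)
  (p : T -> 'I_d -> R) (s : T -> R) (v : T) :
  (0 < k)%N -> (0 < d)%N ->
  simple_graph e ->
  is_ramsey_number (k + 2) d N ->
  (exists S : {set T},
      (N <= #|S|)%N /\ (forall u, u \in S -> e v u) /\
      (forall u u', u \in S -> u' \in S -> ~~ e u u')) ->
  (forall u, 0 < s u) ->
  (* f : u |-> cube (p u) (s u) is injective (a bijection onto the arrangement) *)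
  (forall u u', (forall x, in_cube (p u) (s u) x <-> in_cube (p u') (s u') x) ->
     u = u') ->
  (forall u u', u != u' ->
     (e u u' <-> exists x, in_cube (p u) (s u) x /\ in_cube (p u') (s u') x)) ->
  exists w, e v w /\ k%:R * s w < s v.
Proof.
move=> k_gt0 d_gt0 [_ e_irr] [ramseyN _] [S [leNS [Sv Sindep]]] s_gt0 _ e_cubes.
have s_ge0 u : 0 <= s u by apply/ltW.
have [A [c [AS cardA Asep]]] :
    exists (A : {set T}) (c : 'I_d), [/\ A \subset S, #|A| = (k + 2)%N &
      {in A &, forall u u', u != u' -> separated (p^~ c) s u u'}].
  apply: (ramsey_monochromatic_subset (P := fun u u' c => separated (p^~ c) s u u'))
    ramseyN d_gt0 _ leNS _ => [u u' c' | ]; first exact: (separatedC (p^~ c')).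
  move=> u u' uS u'S neq_uu'; apply: disjoint_cubes_separated => // meet.
  by move/negP: (Sindep u u' uS u'S); apply; apply/e_cubes.
have meet_v u : u \in A -> p v c <= p u c + s u /\ p u c <= p v c + s v.
  move=> uA; have evu := Sv u (subsetP AS u uA).
  have neq_vu : v != u by apply: contraTneq evu => <-; rewrite e_irr.
  have [x [xv xu]] := (e_cubes v u neq_vu).1 evu.
  exact: in_cube_overlap xv xu.
have [w wA short] := exists_short_interval s_ge0 k_gt0 (etrans cardA (addn2 k))
  Asep meet_v.
by exists w; split; first exact/Sv/(subsetP AS).
Qed.
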